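(* The map $G$ is chaotic on $(\mathcal{X},d)$ in the sense of Devaney, i.e. $G$ is regular (its periodic points are dense in $\mathcal{X}$) and topologically transitive (for every pair of nonempty open sets $U,V\subset\mathcal{X}$ there exists $k>0$ with $G^k(U)\cap V\neq\emptyset$).
   Context: Fix an integer $\mathsf{N}\ge 1$ and write $\llbracket a;b\rrbracket=\{a,a+1,\dots,b\}$. Let $f:\mathbb{Z}/4\mathbb{Z}\to\mathbb{Z}/4\mathbb{Z}$, $f(x)=x+1 \pmod 4$, with $f^{-1}(x)=x-1\pmod 4$ and $f^0=\mathrm{id}$. Let $\mathrm{sign}(x)=1$ if $x>0$, $0$ if $x=0$, $-1$ if $x<0$. For $k\in\llbracket -\mathsf{N};\mathsf{N}\rrbracket$ define $f_k:(\mathbb{Z}/4\mathbb{Z})^{\mathsf{N}}\to(\mathbb{Z}/4\mathbb{Z})^{\mathsf{N}}$ by $f_k(C_1,\dots,C_{\mathsf{N}})=(C_1,\dots,C_{|k|-1},f^{\mathrm{sign}(k)}(C_{|k|}),\dots,f^{\mathrm{sign}(k)}(C_{\mathsf{N}}))$ (so $f_0$ is the identity). Folding sequences are $F=(F^j)_{j\in\mathbb{N}}\in\llbracket -\mathsf{N};\mathsf{N}\rrbracket^{\mathbb{N}}$; let $i(F)=F^0$ and let $\sigma$ be the shift, $\sigma((F^j)_{j})=(F^{j+1})_{j}$. A finite sequence $(k_1,\dots,k_n)$ is identified with $(k_1,\dots,k_n,0,0,\dots)$. On $\check{\mathcal{X}}=(\mathbb{Z}/4\mathbb{Z})^{\mathsf{N}}\times\llbracket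 -\mathsf{N};\mathsf{N}\rrbracket^{\mathbb{N}}$ define $G((C,F))=(f_{i(F)}(C),\sigma(F))$. SAW requirement: for $C\in(\mathbb{Z}/4\mathbb{Z})^{\mathsf{N}}$ let $p(C)=(X_0,\dots,X_{\mathsf{N}})\in(\mathbb{Z}^2)^{\mathsf{N}+1}$ with $X_0=(0,0)$ and $X_i=X_{i-1}+v(C_i)$, where $v(0)=(1,0)$, $v(1)=(0,-1)$, $v(2)=(-1,0)$, $v(3)=(0,1)$. $C$ satisfies the SAW requirement iff the points $X_0,\dots,X_{\mathsf{N}}$ are pairwise distinct. Let $\mathfrak{C}_{\mathsf{N}}$ be the set of $C\in(\mathbb{Z}/4\mathbb{Z})^{\mathsf{N}}$ for which there exist $n\ge1$ and $k_1,\dots,k_n\in\llbracket -\mathsf{N};\mathsf{N}\rrbracket$ such that $C$ is the first component of $G^n(((0,\dots,0),(k_1,\dots,k_n)))$ and, for every $i\le n$, the first component of $G^i(((0,\dots,0),(k_1,\dots,k_n)))$ satisfies the SAW requirement. Let $\mathcal{X}=\mathfrak{C}_{\mathsf{N}}\times\llbracket -\mathsf{N};\mathsf{N}\rrbracket^{\mathbb{N}}$ with metric $d((C,F),(\check C,\check F))=d_C(C,\check C)+d_F(F,\check F)$, where $d_C(C,\check C)=\sum_{k=1}^{\mathsf{N}}\delta(C_k,\check C_k)2^{\mathsf{N}-k}$ ($\delta(a,b)=0$ if $a=b$, $1$ otherwise) and $d_F(F,\check F)=\frac{9}{2\mathsf{N}}\sum_{k=0}^{\infty}\frac{|F^k-\check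 F^k|}{10^{k+1}}$. The paper regards $G$ as a self-map of $\mathcal{X}$. *)

From Stdlib Require Import ZArith List Reals.
From Coquelicot Require Import Coquelicot.
Import ListNotations.
Open Scope Z_scope.

(* A configuration C in (Z/4Z)^N is a list of integers (representatives in 0..3).
   A folding sequence F is a map nat -> Z (values in [-N;N]). *)
Definition config := list Z.
Definition foldseq := nat -> Z.
Definition point : Type := (config * foldseq)%type.

(* f^{sign k} applied to coordinates |k|,...,N (1-indexed); f_0 = id. *)
Definition fold_k (k : Z) (C : config) : config :=
  let fix go (i : nat) (l : list Z) : list Z :=
    match l with
    | [] => []
    | c :: l' =>
        (if (Z.abs k <=? Z.of_nat i)%Z then Z.modulo (c + Z.sgn k) 4 else c)
          :: go (S i) l'
    end
  in go 1%nat C.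

Definition shift (F : foldseq) : foldseq := fun j => F (S j).

Definition G (x : point) : point := (fold_k (snd x 0%nat) (fst x), shift (snd x)).

Definition Giter (n : nat) (x : point) : point := Nat.iter n G x.

(* finite sequence (k1,...,kn) identified with (k1,...,kn,0,0,...) *)
Definition seq_of_list (ks : list Z) : foldseq := fun j => nth j ks 0.

Definition vstep (c : Z) : Z * Z :=
  match Z.modulo c 4 with
  | 0 => (1, 0)
  | 1 => (0, -1)
  | 2 => (-1, 0)
  | _ => (0, 1)
  end.

Fixpoint path_from (X : Z * Z) (C : config) : list (Z * Z) :=
  match C with
  | [] => [X]
  | c :: C' => X :: path_from (fst X + fst (vstep c), snd X + snd (vstep c)) C'
  end.

Definition pos (C : config) : list (Z * Z) := path_from (0, 0) C.

Definition SAW (C : config) : Prop := NoDup (pos C).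

Definition in_range (N : nat) (k : Z) : Prop := - Z.of_nat N <= k <= Z.of_nat N.

Definition in_frakC (N : nat) (C : config) : Prop :=
  exists ks : list Z,
    (1 <= length ks)%nat /\ List.Forall (in_range N) ks /\
    C = fst (Giter (length ks) (repeat 0 N, seq_of_list ks)) /\
    (forall i : nat, (1 <= i <= length ks)%nat ->
       SAW (fst (Giter i (repeat 0 N, seq_of_list ks)))).

Definition InX (N : nat) (x : point) : Prop :=
  in_frakC N (fst x) /\ forall j : nat, in_range N (snd x j).

Open Scope R_scope.

Definition delta (a b : Z) : R := if Z.eqb a b then 0 else 1.

Definition d_C (N : nat) (C C' : config) : R :=
  fold_right Rplus 0
    (map (fun k : nat => delta (nth (k - 1) C 0%Z) (nth (k - 1) C' 0%Z) * 2 ^ (N - k))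
         (seq 1 N)).

Definition d_F (N : nat) (F F' : foldseq) : R :=
  9 / (2 * INR N) * Series (fun k => IZR (Z.abs (F k - F' k)) / 10 ^ (S k)).

Definition d (N : nat) (x y : point) : R := d_C N (fst x) (fst y) + d_F N (snd x) (snd y).

Definition openX (N : nat) (U : point -> Prop) : Prop :=
  (forall x, U x -> InX N x) /\
  (forall x, U x -> exists eps : R, 0 < eps /\
     forall y, InX N y -> d N x y < eps -> U y).

Definition nonempty (U : point -> Prop) : Prop := exists x, U x.

Definition periodic_point (x : point) : Prop :=
  exists n : nat, (1 <= n)%nat /\ Giter n x = x.

Definition regular (N : nat) : Prop :=
  forall U, openX N U -> nonempty U -> exists x, U x /\ periodic_point x.

Definition transitive (N : nat) : Prop :=
  forall U V, openX N U -> openX N V -> nonempty U -> nonempty V ->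
    exists (k : nat) (x : point), (1 <= k)%nat /\ U x /\ V (Giter k x).

Definition devaney_chaotic (N : nat) : Prop := regular N /\ transitive N.

(** Every fold [f_k] is a bijection of the digit vectors, undone by [f_(-k)],
    so any finite word of folds can be followed by its reverse negated word
    to come back to the starting configuration. A neighbourhood of a point
    [(C, F)] of [X] contains every [(C, F')] where [F'] agrees with [F] on a
    long enough prefix, because the [d_F] part of the metric is a geometric
    tail. Hence: repeating "prefix of [F], then its undo word" forever gives
    a periodic point arbitrarily close to [(C, F)]; and "prefix of [F1], its
    undo, undo the word that built [C1] from [0], the word that builds [C2]
    from [0], then [F2]" is a point near [(C1, F1)] whose orbit hits
    [(C2, F2)] exactly. *)

From Pilot Require Import Defs.
From Stdlib Require Import ZArith List Reals.
From Coquelicot Require Import Coquelicot.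
From Stdlib Require Import Lia Lra FunctionalExtensionality.
Import ListNotations.

Definition digits (C : config) : Prop := List.Forall (fun c => (0 <= c < 4)%Z) C.

Lemma digits_repeat0 N : digits (repeat 0%Z N).
Proof. apply Forall_forall; intros c Hc; apply repeat_spec in Hc; lia. Qed.

Fixpoint fold_from (k : Z) (i : nat) (C : config) : config :=
  match C with
  | [] => []
  | c :: C' =>
      (if (Z.abs k <=? Z.of_nat i)%Z then ((c + Z.sgn k) mod 4)%Z else c)
        :: fold_from k (S i) C'
  end.

Lemma fold_k_fold_from k C : fold_k k C = fold_from k 1 C.
Proof.
  unfold fold_k; generalize 1%nat.
  induction C as [|c C IH]; intro i; simpl; [reflexivity|].
  f_equal; apply IH.
Qed.

Lemma digits_fold_from k i C : digits C -> digits (fold_from k i C).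
Proof.
  revert i; induction C as [|c C IH]; intros i HC; simpl; constructor;
    inversion HC; subst.
  - destruct (Z.abs k <=? Z.of_nat i)%Z; [apply Z.mod_pos_bound; lia | assumption].
  - apply IH; assumption.
Qed.

Lemma fold_from_oppK k i C : digits C -> fold_from (- k) i (fold_from k i C) = C.
Proof.
  revert i; induction C as [|c C IH]; intros i HC; simpl; [reflexivity|].
  inversion HC; subst.
  rewrite IH by assumption; f_equal.
  rewrite Z.abs_opp; destruct (Z.abs k <=? Z.of_nat i)%Z; [|reflexivity].
  rewrite Z.sgn_opp, Zplus_mod_idemp_l.
  replace (c + Z.sgn k + - Z.sgn k)%Z with c by lia.
  apply Z.mod_small; lia.
Qed.

Definition run (w : list Z) (C : config) : config :=
  fold_left (fun C k => fold_k k C) w C.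

Definition undo (w : list Z) : list Z := rev (map Z.opp w).

Lemma run_app w1 w2 C : run (w1 ++ w2) C = run w2 (run w1 C).
Proof. apply fold_left_app. Qed.

Lemma digits_run w C : digits C -> digits (run w C).
Proof.
  revert C; induction w as [|k w IH]; intros C HC; simpl; [assumption|].
  apply IH; rewrite fold_k_fold_from; apply digits_fold_from, HC.
Qed.

Lemma run_undoK w C : digits C -> run (undo w) (run w C) = C.
Proof.
  revert C; induction w as [|k w IH]; intros C HC; simpl; [reflexivity|].
  unfold undo in *; simpl; rewrite run_app, IH.
  - simpl; rewrite !fold_k_fold_from; apply fold_from_oppK, HC.
  - rewrite fold_k_fold_from; apply digits_fold_from, HC.
Qed.

Definition prefix (F : foldseq) (m : nat) : list Z := map F (seq 0 m).

Lemma nth_prefix F m j : (j < m)%nat -> nth j (prefix F m) 0%Z = F j.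
Proof.
  intro Hj; unfold prefix.
  rewrite nth_indep with (d' := F 0%nat) by (rewrite length_map, length_seq; lia).
  rewrite map_nth, seq_nth by lia; reflexivity.
Qed.

Lemma prefix_ext F F' m :
  (forall j, (j < m)%nat -> F j = F' j) -> prefix F m = prefix F' m.
Proof.
  intro H; apply map_ext_in; intros j Hj; apply in_seq in Hj; apply H; lia.
Qed.

Lemma prefix_nth (w : list Z) : prefix (fun j => nth j w 0%Z) (length w) = w.
Proof.
  unfold prefix; induction w as [|a w IH]; simpl; [reflexivity|].
  f_equal; rewrite <- seq_shift, map_map; exact IH.
Qed.

Lemma Giter_pair n C F :
  Giter n (C, F) = (run (prefix F n) C, fun j => F (n + j)%nat).
Proof.
  induction n as [|n IH]; [reflexivity|].
  change (Giter (S n) (C, F)) with (G (Giter n (C, F))).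
  rewrite IH; unfold G; cbn [fst snd]; f_equal.
  - unfold prefix; rewrite seq_S, map_app, run_app, Nat.add_0_r; reflexivity.
  - apply functional_extensionality; intro j; unfold Defs.shift; f_equal; lia.
Qed.

Definition splice (w : list Z) (F : foldseq) : foldseq :=
  fun j => if (j <? length w)%nat then nth j w 0%Z else F (j - length w)%nat.

Lemma Giter_splice w C F : Giter (length w) (C, splice w F) = (run w C, F).
Proof.
  rewrite Giter_pair; f_equal.
  - rewrite (prefix_ext _ (fun j => nth j w 0%Z)), prefix_nth; [reflexivity|].
    intros j Hj; unfold splice; destruct (Nat.ltb_spec j (length w)); lia.
  - apply functional_extensionality; intro j; unfold splice.
    destruct (Nat.ltb_spec (length w + j) (length w)); [lia|]; f_equal; lia.
Qed.

Lemma splice_prefix_app F m w F' j :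
  (j < m)%nat -> splice (prefix F m ++ w) F' j = F j.
Proof.
  intro Hj; unfold splice.
  assert (Hlen : length (prefix F m) = m)
    by (unfold prefix; rewrite length_map, length_seq; reflexivity).
  rewrite length_app, Hlen; destruct (Nat.ltb_spec j (m + length w)); [|lia].
  rewrite app_nth1 by lia; apply nth_prefix, Hj.
Qed.

Definition cycle (w : list Z) : foldseq := fun j => nth (j mod length w) w 0%Z.

Lemma splice_cycle w : w <> [] -> splice w (cycle w) = cycle w.
Proof.
  intro Hw; assert (Hn : length w <> 0%nat) by (destruct w; simpl; congruence).
  apply functional_extensionality; intro j; unfold splice, cycle.
  destruct (Nat.ltb_spec j (length w)).
  - rewrite Nat.mod_small by assumption; reflexivity.
  - f_equal; rewrite <- (Nat.Div0.mod_add (j - length w) 1), Nat.mul_1_l.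
    rewrite Nat.sub_add by assumption; reflexivity.
Qed.

Section Ranges.

Variable N : nat.

Lemma in_range_nth w j : List.Forall (in_range N) w -> in_range N (nth j w 0%Z).
Proof.
  intro Hw; revert j; induction Hw as [|k w Hk Hw IH]; intros [|j]; simpl; auto.
  all: unfold in_range; lia.
Qed.

Lemma Forall_in_range_prefix F m :
  (forall j, in_range N (F j)) -> List.Forall (in_range N) (prefix F m).
Proof. intro HF; apply Forall_map, Forall_forall; auto. Qed.

Lemma Forall_in_range_undo w : List.Forall (in_range N) w -> List.Forall (in_range N) (undo w).
Proof.
  intro Hw; apply Forall_rev, Forall_map.
  eapply Forall_impl; [|exact Hw]; unfold in_range; intros; lia.
Qed.

Lemma in_range_splice w F :
  List.Forall (in_range N) w -> (forall j, in_range N (F j)) ->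
  forall j, in_range N (splice w F j).
Proof.
  intros Hw HF j; unfold splice; destruct (j <? length w)%nat; auto.
  apply in_range_nth, Hw.
Qed.

Lemma in_range_cycle w : List.Forall (in_range N) w -> forall j, in_range N (cycle w j).
Proof. intros Hw j; apply in_range_nth, Hw. Qed.

End Ranges.

Lemma in_frakC_run N C : in_frakC N C ->
  exists w, w <> [] /\ List.Forall (in_range N) w /\ C = run w (repeat 0%Z N).
Proof.
  intros [w [Hlen [Hw [HC _]]]]; exists w; repeat split; auto.
  - destruct w; simpl in Hlen; [lia | discriminate].
  - rewrite HC, Giter_pair; simpl; unfold seq_of_list; rewrite prefix_nth; reflexivity.
Qed.

Lemma digits_in_frakC N C : in_frakC N C -> digits C.
Proof.
  intro HC; destruct (in_frakC_run _ _ HC) as [w [_ [_ ->]]].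
  apply digits_run, digits_repeat0.
Qed.

Lemma d_F_term_le N m (F F' : foldseq) k :
  (forall j, in_range N (F j)) -> (forall j, in_range N (F' j)) ->
  (forall j, (j < m)%nat -> F j = F' j) ->
  (0 <= IZR (Z.abs (F k - F' k)) / 10 ^ S k <= 2 * INR N * (/3) ^ m * (/3) ^ k)%R.
Proof.
  intros HF HF' Hagree.
  assert (P10 : (0 < 10 ^ S k)%R) by (apply pow_lt; lra).
  assert (P3 : (0 < 3 ^ m * 3 ^ k)%R) by (apply Rmult_lt_0_compat; apply pow_lt; lra).
  split.
  { apply Rmult_le_pos; [apply IZR_le; lia | left; apply Rinv_0_lt_compat, P10]. }
  destruct (Nat.lt_ge_cases k m) as [Hk|Hk].
  - rewrite Hagree, Z.sub_diag by assumption; simpl; unfold Rdiv; rewrite Rmult_0_l.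
    repeat apply Rmult_le_pos; try apply pos_INR; try apply pow_le; lra.
  - assert (Habs : (Z.abs (F k - F' k) <= 2 * Z.of_nat N)%Z)
      by (specialize (HF k); specialize (HF' k); unfold in_range in *; lia).
    apply IZR_le in Habs; rewrite mult_IZR, <- INR_IZR_INZ in Habs.
    rewrite !pow_inv; unfold Rdiv; rewrite Rmult_assoc, <- Rinv_mult.
    apply Rmult_le_compat; auto.
    + apply IZR_le; lia.
    + left; apply Rinv_0_lt_compat, P10.
    + apply Rinv_le_contravar; [exact P3|].
      (* [3^m 3^k <= 9^k <= 10^(k+1)] since [m <= k] *)
      apply Rle_trans with (3 ^ k * 3 ^ k)%R.
      { apply Rmult_le_compat_r; [apply pow_le; lra | apply Rle_pow; [lra | exact Hk]]. }
      rewrite <- Rpow_mult_distr; simpl.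
      assert ((3 * 3) ^ k <= 10 ^ k)%R by (apply pow_incr; lra).
      assert (0 <= 10 ^ k)%R by (apply pow_le; lra); lra.
Qed.

Lemma d_le_of_prefix_agree N m C (F F' : foldseq) : (1 <= N)%nat ->
  (forall j, in_range N (F j)) -> (forall j, in_range N (F' j)) ->
  (forall j, (j < m)%nat -> F j = F' j) ->
  (d N (C, F) (C, F') <= 27 / 2 * (/3) ^ m)%R.
Proof.
  intros HN HF HF' Hagree.
  assert (HdC : d_C N C C = 0%R).
  { unfold d_C; induction (seq 1 N); simpl; [reflexivity|].
    rewrite IHl; unfold delta; rewrite Z.eqb_refl; ring. }
  unfold d; simpl; rewrite HdC, Rplus_0_l; unfold d_F.
  set (c := (2 * INR N * (/3) ^ m)%R).
  assert (Hq : (Rabs (/3) < 1)%R) by (rewrite Rabs_pos_eq; lra).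
  assert (HS : (Series (fun k => IZR (Z.abs (F k - F' k)) / 10 ^ S k)
                <= Series (fun k => c * (/3) ^ k))%R).
  { apply Series_le; [intro k; apply d_F_term_le; auto|].
    apply (ex_series_scal_l c (fun k => (/3) ^ k)%R), ex_series_geom, Hq. }
  rewrite Series_scal_l, Series_geom in HS by exact Hq.
  assert (HNr : (1 <= INR N)%R) by (apply (le_INR 1), HN).
  assert ((0 <= (/3) ^ m)%R) by (apply pow_le; lra).
  replace (/ (1 - /3))%R with (3 / 2)%R in HS by field; unfold c in HS.
  apply Rle_trans with (9 / (2 * INR N) * (2 * INR N * (/3) ^ m * (3 / 2)))%R.
  - apply Rmult_le_compat_l; [left; apply Rdiv_lt_0_compat; lra | exact HS].
  - right; field; lra.
Qed.

Lemma geometric_lt eps : (0 < eps)%R -> exists m, (27 / 2 * (/3) ^ m < eps)%R.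
Proof.
  intro He; assert (Hq : (Rabs (/3) < 1)%R) by (rewrite Rabs_pos_eq; lra).
  destruct (pow_lt_1_zero (/3) Hq (eps * 2 / 27)%R) as [m Hm]; [lra|].
  exists m; specialize (Hm m (le_n m)).
  rewrite Rabs_pos_eq in Hm by (apply pow_le; lra); lra.
Qed.

Lemma openX_prefix_nbhd N U C F : (1 <= N)%nat -> openX N U -> U (C, F) ->
  exists m, forall F', (forall j, in_range N (F' j)) ->
    (forall j, (j < m)%nat -> F' j = F j) -> U (C, F').
Proof.
  intros HN [HUX HUo] HU.
  destruct (HUX _ HU) as [HC HF]; destruct (HUo _ HU) as [eps [He Heps]].
  destruct (geometric_lt eps He) as [m Hm]; exists m; intros F' HF' Hagree.
  apply Heps; [split; assumption|].
  eapply Rle_lt_trans; [|exact Hm].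
  apply d_le_of_prefix_agree; auto; intros j Hj; symmetry; auto.
Qed.

Theorem mainTheorem5 (N : nat) (HN : (1 <= N)%nat) : devaney_chaotic N.
Proof.
  split.
  - intros U HU [[C F] HCF].
    destruct (proj1 HU _ HCF) as [HC HF]; simpl in HC, HF.
    destruct (openX_prefix_nbhd _ _ _ _ HN HU HCF) as [m Hnbhd].
    set (B := prefix F (S m) ++ undo (prefix F (S m))).
    assert (HB : List.Forall (in_range N) B)
      by (apply Forall_app; split; [|apply Forall_in_range_undo];
          apply Forall_in_range_prefix, HF).
    assert (Hne : B <> []) by (unfold B, prefix; simpl; discriminate).
    exists (C, cycle B); split.
    + apply Hnbhd; [apply in_range_cycle, HB|].
      intros j Hj; rewrite <- splice_cycle by exact Hne.
      apply splice_prefix_app; lia.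
    + exists (length B); split; [destruct B; [contradiction | simpl; lia]|].
      rewrite <- (splice_cycle B Hne) at 1; rewrite Giter_splice.
      unfold B; rewrite run_app, run_undoK by (eapply digits_in_frakC, HC); reflexivity.
  - intros U V HU HV [[C1 F1] HCF1] [[C2 F2] HCF2].
    destruct (proj1 HU _ HCF1) as [HC1 HF1]; destruct (proj1 HV _ HCF2) as [HC2 HF2].
    simpl in HC1, HF1, HC2, HF2.
    destruct (openX_prefix_nbhd _ _ _ _ HN HU HCF1) as [m Hnbhd].
    destruct (in_frakC_run _ _ HC1) as [w1 [_ [Hw1 E1]]].
    destruct (in_frakC_run _ _ HC2) as [w2 [Hne2 [Hw2 E2]]].
    set (P := prefix F1 m).
    set (W := P ++ undo P ++ undo w1 ++ w2).
    assert (HW : List.Forall (in_range N) W).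
    { assert (HP : List.Forall (in_range N) P) by (apply Forall_in_range_prefix, HF1).
      unfold W; repeat (apply Forall_app; split); auto using Forall_in_range_undo. }
    exists (length W), (C1, splice W F2); repeat split.
    + unfold W; rewrite !length_app; destruct w2; [contradiction | simpl; lia].
    + apply Hnbhd; [apply in_range_splice; assumption|].
      intros j Hj; apply splice_prefix_app, Hj.
    + rewrite Giter_splice; unfold W; rewrite !run_app.
      rewrite run_undoK by (eapply digits_in_frakC, HC1).
      rewrite E1, run_undoK, <- E2 by apply digits_repeat0; exact HCF2.
Qed.
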